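(* Let $G$, $\varkappa$, $\mathcal K=\mathcal K(G,\varkappa)$ and let $\succ$ be any hereditary ordering of $\mathcal K$ produced by the construction described in the context. Let $\rho\in\mathcal K$, $\rho\ne\emptyset$, let $v\in\mathbb V_\rho$, and suppose $\mathbb V_\rho(v)\ne\emptyset$. Then there is a vertex $u\in\mathbb V_\rho(v)$ such that $|g_{wz}-1|\le|g_{uv}-1|$ for all $w,z\in\mathbb V_\rho(v)\cup\{v\}$.
   Context: $G=(g_{uv})_{1\le u,v\le m}$ is a symmetric complex matrix with units on the diagonal and $\varkappa>0$. $\Gamma(G,\varkappa)$ is the graph on $[m]=\{1,\dots,m\}$ with $\{u,v\}$ an edge iff $|g_{uv}-1|<\varkappa$, and $\mathcal K=\mathcal K(G,\varkappa)$ is its clique complex. For a strict total ordering $\succ$ of $\mathcal K$ and non-empty $\sigma$, $\mu(\sigma)$ is the $\succ$-largest facet of $\sigma$. Construction of $\succ$: simplices of larger dimension are larger; vertices are ordered arbitrarily; assuming $\succ$ is defined on $(s-1)$-simplices, for $s$-simplices put $\sigma\succ\tau$ if $\mu(\sigma)\succ\mu(\tau)$; for each $(s-1)$-simplex $\rho$, let $\mathbb V_\rho$ be the set of vertices $v\notin\rho$ with $\rho\cup\{v\}\in\mathcal K$ and $\mu(\rho\cup\{v\})=\rho$, $t=|\mathbb V_\rho|$; choose $v_1,\dots,v_t$ successively: for $j<t$, among pairs $w\ne z$ in $\mathbb V_\rho\setminus\{v_1,\dots,v_{j-1}\}$ pick a pair $(w^0,z^0)$ maximizing $|g_{wz}-1|$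 (ties broken arbitrarily) and set $v_j=w^0$; $v_t$ is the remaining vertex; then put $\rho\cup\{v_1\}\succ\rho\cup\{v_2\}\succ\dots\succ\rho\cup\{v_t\}$. For $v\in\mathbb V_\rho$, $\mathbb V_\rho(v)$ is the set of $u\in\mathbb V_\rho$ with $\rho\cup\{v\}\succ\rho\cup\{u\}$. *)

From HB Require Import structures.
From mathcomp Require Import all_boot all_order all_algebra.
From mathcomp Require Import reals complex.
Set Implicit Arguments. Unset Strict Implicit. Unset Printing Implicit Defensive.
Import Order.TTheory GRing.Theory Num.Theory.
Local Open Scope ring_scope.

Section Defs.
Variables (R : realType) (m : nat).
Implicit Types (G : 'M[R[i]]_m) (kappa : R) (sigma rho tau : {set 'I_m}).

Definition gedge G kappa (u v : 'I_m) : bool :=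
  (u != v) && (`|G u v - 1| < (kappa%:C)%C).

(* the clique complex K(G,kappa): sets of vertices that are cliques
   (the empty simplex included) *)
Definition inK G kappa sigma : bool :=
  [forall u in sigma, forall v in sigma, (u != v) ==> gedge G kappa u v].

Definition strict_total_on_K G kappa (succ : rel {set 'I_m}) : Prop :=
  [/\ (forall s, inK G kappa s -> ~~ succ s s),
      (forall s t u, inK G kappa s -> inK G kappa t -> inK G kappa u ->
         succ s t -> succ t u -> succ s u) &
      (forall s t, inK G kappa s -> inK G kappa t -> s != t ->
         succ s t || succ t s)].

Definition facet tau sigma : bool :=
  (tau \subset sigma) && (#|tau| == #|sigma|.-1) && (0 < #|sigma|)%N.

Definition mu (succ : rel {set 'I_m}) sigma : {set 'I_m} :=
  odflt set0 [pick rho | facet rho sigma &&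
     [forall tau, (facet tau sigma && (tau != rho)) ==> succ rho tau]].

Definition Vrho G kappa (succ : rel {set 'I_m}) rho : {set 'I_m} :=
  [set v | (v \notin rho) && inK G kappa (v |: rho) && (mu succ (v |: rho) == rho)].

Definition Vrho_v G kappa (succ : rel {set 'I_m}) rho (v : 'I_m) : {set 'I_m} :=
  [set u in Vrho G kappa succ rho | succ (v |: rho) (u |: rho)].

(* The ordering of the rho u {v}, v in V_rho, is given by a greedy sequence
   v_1,...,v_t (0-indexed below): for j < t, v_j = w0 for a pair w0 <> z0 of
   remaining vertices maximizing |g_wz - 1|, and
   rho u {v_1} > rho u {v_2} > ... > rho u {v_t}. *)
Definition greedy_block G kappa (succ : rel {set 'I_m}) rho : Prop :=
  exists vs : seq 'I_m,
    [/\ uniq vs,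
        [set x in vs] = Vrho G kappa succ rho,
        (forall x y, x \in vs -> y \in vs ->
           succ (x |: rho) (y |: rho) = (index x vs < index y vs)%N) &
        (forall j (vj : 'I_m) rest, (j < (size vs).-1)%N -> drop j vs = vj :: rest ->
           exists w0 z0, [/\ w0 \in vj :: rest, z0 \in vj :: rest, w0 != z0,
             (forall w z, w \in vj :: rest -> z \in vj :: rest -> w != z ->
                `|G w z - 1| <= `|G w0 z0 - 1|) &
             vj = w0])].

Definition constructed_order G kappa (succ : rel {set 'I_m}) : Prop :=
  [/\ strict_total_on_K G kappa succ,
      (forall s t, inK G kappa s -> inK G kappa t -> (#|t| < #|s|)%N -> succ s t),
      (forall s t, inK G kappa s -> inK G kappa t -> #|s| = #|t| -> (2 <= #|s|)%N ->
         succ (mu succ s) (mu succ t) -> succ s t) &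
      (forall rho, inK G kappa rho -> rho != set0 -> greedy_block G kappa succ rho)].

End Defs.

(* In the greedy enumeration v_1, ..., v_t of V_rho, the vertices u with
   rho u {v} > rho u {u} are exactly those after v, so V_rho(v) u {v} is the
   tail of the enumeration starting at v.  If this tail has a second element,
   v was chosen as the first vertex w0 of a pair (w0, z0) of tail vertices
   maximizing |g_wz - 1|; by symmetry of G, u := z0 is the required vertex.
   Pairs w = z are harmless since then |g_ww - 1| = 0. *)
From HB Require Import structures.
From mathcomp Require Import all_boot all_order all_algebra.
From mathcomp Require Import reals complex.
Set Implicit Arguments. Unset Strict Implicit. Unset Printing Implicit Defensive.
Import Order.TTheory GRing.Theory Num.Theory.
Local Open Scope ring_scope.

Lemma mem_drop_uniq (T : eqType) (s : seq T) j x : uniq s -> x \in s ->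
  (x \in drop j s) = (j <= index x s)%N.
Proof.
move=> Us xs; rewrite leqNgt -in_take //.
move: Us xs; rewrite -{1 2}(cat_take_drop j s) cat_uniq mem_cat.
case/and3P=> _ /hasPn disj _ /orP[xt | xd]; last by rewrite xd (disj _ xd).
by rewrite xt; apply/negbTE; apply: contraL xt => /disj.
Qed.

Section GreedyEnumeration.

Variables (R : realType) (m : nat) (G : 'M[R[i]]_m) (kappa : R).
Variables (succ : rel {set 'I_m}) (rho : {set 'I_m}) (vs : seq 'I_m).
Hypotheses (Uvs : uniq vs) (Vrho_vs : [set x in vs] = Vrho G kappa succ rho).
Hypothesis succ_index : forall x y, x \in vs -> y \in vs ->
  succ (x |: rho) (y |: rho) = (index x vs < index y vs)%N.

Lemma mem_Vrho_v_index v x : v \in vs ->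
  (x \in Vrho_v G kappa succ rho v) = (x \in vs) && (index v vs < index x vs)%N.
Proof.
move=> vvs; rewrite inE -Vrho_vs inE.
by case: (boolP (x \in vs)) => // xvs; rewrite succ_index.
Qed.

Lemma setU1_Vrho_v_drop v : v \in vs ->
  v |: Vrho_v G kappa succ rho v = [set x in drop (index v vs) vs].
Proof.
move=> vvs; apply/setP=> x; rewrite in_setU1 mem_Vrho_v_index // inE.
have [xvs | xNvs] := boolP (x \in vs); last first.
  have xNv : x != v by apply: contraNneq xNvs => ->.
  by rewrite orbF (negbTE xNv); apply/esym/negbTE; apply: contra xNvs => /mem_drop.
have index_eq : (index v vs == index x vs) = (v == x).
  exact: (inj_in_eq (index_inj v (s:=vs))).
by rewrite mem_drop_uniq // [(index v vs <= _)%N]leq_eqVlt index_eq eq_sym.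
Qed.

End GreedyEnumeration.

Theorem lemma8 (R : realType) (m : nat) (G : 'M[R[i]]_m) (kappa : R)
  (succ : rel {set 'I_m}) (rho : {set 'I_m}) (v : 'I_m) :
  G^T = G -> (forall u, G u u = 1) -> 0 < kappa ->
  constructed_order G kappa succ ->
  inK G kappa rho -> rho != set0 ->
  v \in Vrho G kappa succ rho ->
  Vrho_v G kappa succ rho v != set0 ->
  exists2 u, u \in Vrho_v G kappa succ rho v &
    forall w z, w \in v |: Vrho_v G kappa succ rho v ->
                z \in v |: Vrho_v G kappa succ rho v ->
      `|G w z - 1| <= `|G u v - 1|.
Proof.
move=> GT Gdiag _ [_ _ _ greedy] rhoK rho_ne vV /set0Pn[u0 u0V].
have [vs [Uvs Vrho_vs succ_index greedy_step]] := greedy rho rhoK rho_ne.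
have vvs : v \in vs by rewrite -Vrho_vs inE in vV.
have tailE := setU1_Vrho_v_drop Uvs Vrho_vs succ_index vvs.
have drop_v := drop_index vvs.
have v_not_last : (index v vs < (size vs).-1)%N.
  move: u0V; rewrite (mem_Vrho_v_index Vrho_vs succ_index _ vvs).
  case/andP=> u0vs v_lt; have := index_mem u0 vs; rewrite u0vs => u0_lt.
  by rewrite -ltnS prednK // (leq_ltn_trans _ u0_lt).
have [w0 [u [_ u_tail vNu max_vu v_w0]]] := greedy_step _ _ _ v_not_last drop_v.
subst w0.
exists u.
  have : u \in v |: Vrho_v G kappa succ rho v by rewrite tailE inE drop_v.
  by rewrite in_setU1 eq_sym (negbTE vNu).
move=> w z; rewrite tailE !inE drop_v => w_tail z_tail.
have -> : G u v = G v u by rewrite -[in LHS]GT mxE.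
have [-> | wNz] := eqVneq w z; first by rewrite Gdiag subrr normr0 normr_ge0.
exact: max_vu.
Qed.
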